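(* Let $n$ and $m$ be integers with $n\ge 1$ and $0\le m\le n$, and let $\theta>0$ be real. Then $$T'_{n+1,m+1}(\theta)=\frac{\theta^{m}}{(\theta+1)_n}\,\frac{1}{2\pi i}\int_{\mathcal C_R}\frac{(z+1)_n}{z^{m}}\,\frac{dz}{\theta-z},$$ for every $R$ with $0<R<\theta$, where $\mathcal C_R$ is the circle $|z|=R$ in the complex plane, traversed once counterclockwise.
   Context: For a complex number $\alpha$ and an integer $n\ge0$, the Pochhammer symbol is $(\alpha)_0=1$, $(\alpha)_n=\alpha(\alpha+1)\cdots(\alpha+n-1)$. The Stirling numbers of the first kind $S_n^{(k)}$ ($0\le k\le n$) are defined by the polynomial identity $(\theta)_n=\sum_{k=0}^n(-1)^{n-k}S_n^{(k)}\theta^k$. For integers $0\le m\le n$ and real $\theta>0$, define $$S'_{n,m}(\theta)=\frac{1}{(\theta)_n}\sum_{k=m}^n(-1)^{n-k}S_n^{(k)}\theta^k,\qquad T'_{n,m}(\theta)=1-S'_{n,m}(\theta)=\frac{1}{(\theta)_n}\sum_{k=0}^{m-1}(-1)^{n-k}S_n^{(k)}\theta^k .$$ *)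

From Stdlib Require Import Reals Lra Lia.
From Coquelicot Require Import Coquelicot.
Open Scope R_scope.

Fixpoint poch (a : R) (n : nat) : R :=
  match n with
  | O => 1
  | S n' => poch a n' * (a + INR n')
  end.

Fixpoint cpoch (z : C) (n : nat) : C :=
  match n with
  | O => RtoC 1
  | S n' => Cmult (cpoch z n') (Cplus z (RtoC (INR n')))
  end.

Fixpoint sum_lt (f : nat -> R) (m : nat) : R :=
  match m with
  | O => 0
  | S m' => sum_lt f m' + f m'
  end.

(** Stirling numbers of the first kind S_n^(k), normalized so that
    (theta)_n = sum_{k=0}^n (-1)^(n-k) S_n^(k) theta^k
    (lemma [poch_stirling] below), given by their standard recurrence. *)
Fixpoint stirling1 (n k : nat) : R :=
  match n, k with
  | O, O => 1
  | O, S _ => 0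
  | S _, O => 0
  | S n', S k' => stirling1 n' k' - INR n' * stirling1 n' (S k')
  end.

Lemma stirling1_gt (n k : nat) : (n < k)%nat -> stirling1 n k = 0.
Proof.
  revert k; induction n as [|n IH]; intros [|k] H; simpl; try lia; try reflexivity.
  rewrite !IH by lia. ring.
Qed.

Lemma sum_lt_ext (f g : nat -> R) m :
  (forall k, (k < m)%nat -> f k = g k) -> sum_lt f m = sum_lt g m.
Proof.
  induction m; simpl; intros H; [reflexivity|].
  rewrite IHm by (intros; apply H; lia). rewrite H by lia. reflexivity.
Qed.

Lemma sum_lt_plus f g m : sum_lt (fun k => f k + g k) m = sum_lt f m + sum_lt g m.
Proof. induction m; simpl; [ring|rewrite IHm; ring]. Qed.

Lemma sum_lt_scal c f m : sum_lt (fun k => c * f k) m = c * sum_lt f m.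
Proof. induction m; simpl; [ring|rewrite IHm; ring]. Qed.

Lemma sum_lt_shift f m : sum_lt f (S m) = f O + sum_lt (fun k => f (S k)) m.
Proof. induction m; simpl in *; [ring|rewrite IHm; ring]. Qed.

Lemma poch_stirling (theta : R) (n : nat) :
  poch theta n = sum_lt (fun k => (-1) ^ (n - k) * stirling1 n k * theta ^ k) (S n).
Proof.
  induction n as [|n IH].
  - simpl. ring.
  - set (c := fun n k => (-1) ^ (n - k) * stirling1 n k).
    assert (Hc : forall k, c (S n) (S k) = c n k + INR n * c n (S k)).
    { intros k. unfold c. simpl stirling1.
      destruct (Nat.lt_ge_cases n k) as [Hk|Hk].
      - rewrite (stirling1_gt n k Hk), (stirling1_gt n (S k)) by lia. ring.
      - replace (S n - S k)%nat with (n - k)%nat by lia.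
        destruct (Nat.eq_dec n k) as [->|Hne].
        + rewrite (stirling1_gt k (S k)) by lia. ring.
        + replace (n - k)%nat with (S (n - S k)) by lia. simpl. ring. }
    change (poch theta (S n)) with (poch theta n * (theta + INR n)).
    rewrite IH.
    change (sum_lt (fun k => (-1) ^ (S n - k) * stirling1 (S n) k * theta ^ k) (S (S n)))
      with (sum_lt (fun k => c (S n) k * theta ^ k) (S (S n))).
    change (sum_lt (fun k => (-1) ^ (n - k) * stirling1 n k * theta ^ k) (S n))
      with (sum_lt (fun k => c n k * theta ^ k) (S n)).
    rewrite (sum_lt_shift (fun k => c (S n) k * theta ^ k) (S n)).
    rewrite (sum_lt_ext (fun k => c (S n) (S k) * theta ^ S k) (fun k => c n k * theta ^ (S k) + INR n * (c n (S k) * theta ^ S k)))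
      by (intros k _; cbv beta; rewrite Hc; ring).
    rewrite sum_lt_plus, sum_lt_scal.
    assert (H0 : c (S n) O = INR n * c n O).
    { unfold c. simpl stirling1. destruct n; simpl; ring. }
    rewrite H0.
    assert (E1 : sum_lt (fun k => c n k * theta ^ S k) (S n)
                 = theta * sum_lt (fun k => c n k * theta ^ k) (S n)).
    { rewrite <- sum_lt_scal. apply sum_lt_ext. intros; simpl; ring. }
    assert (E2 : sum_lt (fun k => c n (S k) * theta ^ S k) (S n)
                 = sum_lt (fun k => c n k * theta ^ k) (S n) - c n O).
    { rewrite (sum_lt_shift (fun k => c n k * theta ^ k)).
      change (sum_lt (fun k => c n (S k) * theta ^ S k) (S n))
        with (sum_lt (fun k => c n (S k) * theta ^ S k) n + c n (S n) * theta ^ S n).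
      assert (Hz : c n (S n) = 0) by (unfold c; rewrite stirling1_gt by lia; ring).
      rewrite Hz. simpl pow. ring. }
    rewrite E1, E2. ring.
Qed.

Definition Tprime (n m : nat) (theta : R) : R :=
  / poch theta n * sum_lt (fun k => (-1) ^ (n - k) * stirling1 n k * theta ^ k) m.

(** Contour integral of f over the circle |z| = r, traversed once
    counterclockwise, parametrized by z(t) = r e^{it}, t in [0, 2 pi]:
    int_{C_r} f(z) dz = int_0^{2 pi} f(z(t)) z'(t) dt,  z'(t) = i r e^{it}. *)
Definition circle_integral (f : C -> C) (r : R) : C :=
  RInt (V := C_R_CompleteNormedModule)
    (fun t => Cmult (f (r * cos t, r * sin t)) (- r * sin t, r * cos t))
    0 (2 * PI).

From Stdlib Require Import Reals Lra Lia.
From Coquelicot Require Import Coquelicot.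
Open Scope R_scope.

(* Let I(n, m) be the integral of (z)_n z^(-m) / (theta - z) over |z| = r < theta.
   Since (z + 1)_n / z^m = (z)_(n+1) / z^(m+1), the corollary is about I(n+1, m+1).
   Splitting off the last factor z + n of (z)_(n+1) gives
   I(n+1, m+1) = I(n, m) + n I(n, m+1), which is also the recursion satisfied by
   N(n, m) / theta^m, where N(n, m) = sum_(k<m) (-1)^(n-k) S_n^(k) theta^k is the
   numerator of T'_(n,m). The initial values agree too: I(n, 0) = 0 by Cauchy's
   theorem, and I(0, m) = 2 pi i theta^(-m) for m >= 1 is the residue at 0.
   Hence I(n+1, m+1) = 2 pi i N(n+1, m+1) / theta^(m+1), and
   (theta)_(n+1) = theta (theta + 1)_n concludes. *)

Definition stirling_partial (n m : nat) (x : R) : R :=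
  sum_lt (fun k => (-1) ^ (n - k) * stirling1 n k * x ^ k) m.

Lemma Tprime_stirling_partial (n m : nat) (x : R) :
  Tprime n m x = stirling_partial n m x / poch x n.
Proof. unfold Tprime, stirling_partial, Rdiv. apply Rmult_comm. Qed.

Lemma signed_stirling1_S (n k : nat) :
  (-1) ^ (S n - S k) * stirling1 (S n) (S k)
  = (-1) ^ (n - k) * stirling1 n k + INR n * ((-1) ^ (n - S k) * stirling1 n (S k)).
Proof.
  cbn [stirling1].
  destruct (Nat.lt_ge_cases n k) as [Hnk | Hkn].
  - rewrite !(stirling1_gt n) by lia. ring.
  - replace (S n - S k)%nat with (n - k)%nat by lia.
    destruct (Nat.eq_dec n k) as [-> | Hnk].
    + rewrite (stirling1_gt k (S k)) by lia. ring.
    + replace (n - k)%nat with (S (n - S k)) by lia. simpl. ring.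
Qed.

Lemma stirling_partial_0 (m : nat) (x : R) :
  stirling_partial 0 m x = match m with O => 0 | S _ => 1 end.
Proof.
  destruct m as [|m]; [reflexivity|].
  unfold stirling_partial. rewrite sum_lt_shift.
  rewrite (sum_lt_ext _ (fun k => 0 * x ^ S k)) by (intros; simpl; ring).
  rewrite sum_lt_scal. simpl. ring.
Qed.

Lemma stirling_partial_S (n m : nat) (x : R) :
  stirling_partial (S n) (S m) x
  = x * stirling_partial n m x + INR n * stirling_partial n (S m) x.
Proof.
  unfold stirling_partial. rewrite !sum_lt_shift.
  rewrite (sum_lt_ext _ (fun k => x * ((-1) ^ (n - k) * stirling1 n k * x ^ k)
      + INR n * ((-1) ^ (n - S k) * stirling1 n (S k) * x ^ S k)))
    by (intros k _; rewrite signed_stirling1_S; simpl; ring).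
  rewrite sum_lt_plus, !sum_lt_scal.
  destruct n; simpl; ring.
Qed.

Lemma poch_S_shift (a : R) (n : nat) : poch a (S n) = a * poch (a + 1) n.
Proof.
  induction n as [|n IH]; [simpl; ring|].
  change (poch a (S (S n))) with (poch a (S n) * (a + INR (S n))).
  rewrite IH, S_INR. simpl. ring.
Qed.

Lemma poch_pos (a : R) (n : nat) : 0 < a -> 0 < poch a n.
Proof.
  intros Ha. induction n as [|n IH]; simpl; [lra|].
  pose proof (pos_INR n). nra.
Qed.

Lemma cpoch_S_shift (z : C) (n : nat) : cpoch z (S n) = (z * cpoch (z + 1) n)%C.
Proof.
  induction n as [|n IH]; [simpl; ring|].
  change (cpoch z (S (S n))) with (Cmult (cpoch z (S n)) (Cplus z (RtoC (INR (S n))))).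
  rewrite IH, S_INR, RtoC_plus. simpl. ring.
Qed.

Lemma is_RInt_periodic_derive (F f : R -> R) :
  (forall t, is_derive F t (f t)) -> (forall t, continuous f t) ->
  F (2 * PI) = F 0 -> is_RInt f 0 (2 * PI) 0.
Proof.
  intros HF Hf Hper.
  replace 0 with (minus (F (2 * PI)) (F 0)) at 2
    by (rewrite Hper; unfold minus, plus, opp; simpl; ring).
  apply (is_RInt_derive (V := R_CompleteNormedModule)); auto.
Qed.

Lemma is_RInt_const_2PI (c : R) : is_RInt (fun _ => c) 0 (2 * PI) (2 * PI * c).
Proof.
  replace (2 * PI * c) with (scal (2 * PI - 0) c)
    by (unfold scal; simpl; unfold mult; simpl; ring).
  apply (is_RInt_const (V := R_NormedModule)).
Qed.

Lemma cos_INR_mult_2PI (k : nat) : cos (INR k * (2 * PI)) = cos 0.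
Proof. rewrite <- (cos_period 0 k). f_equal. ring. Qed.

Lemma sin_INR_mult_2PI (k : nat) : sin (INR k * (2 * PI)) = sin 0.
Proof. rewrite <- (sin_period 0 k). f_equal. ring. Qed.

Lemma is_RInt_sin_mult (k : nat) (a : R) :
  is_RInt (fun t => a * sin (INR k * t)) 0 (2 * PI) 0.
Proof.
  destruct k as [|k].
  - apply (is_RInt_ext (fun _ => 0)); [intros t _; simpl; rewrite Rmult_0_l, sin_0; ring|].
    rewrite <- (Rmult_0_r (2 * PI)) at 2. apply is_RInt_const_2PI.
  - assert (Hs : INR (S k) <> 0) by (apply not_0_INR; lia).
    pose proof (cos_INR_mult_2PI (S k)) as Hper.
    remember (INR (S k)) as s.
    apply is_RInt_periodic_derive with (fun t => - a * cos (s * t) / s).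
    + intros t. auto_derive; [easy|]. field. exact Hs.
    + intros t. apply (ex_derive_continuous (K := R_AbsRing) (V := R_NormedModule)).
      auto_derive. easy.
    + rewrite Rmult_0_r, Hper. reflexivity.
Qed.

Lemma is_RInt_cos_mult (k : nat) (b : R) :
  is_RInt (fun t => b * cos (INR k * t)) 0 (2 * PI)
    (match k with O => 2 * PI * b | S _ => 0 end).
Proof.
  destruct k as [|k].
  - apply (is_RInt_ext (fun _ => b)); [intros t _; simpl; rewrite Rmult_0_l, cos_0; ring|].
    apply is_RInt_const_2PI.
  - assert (Hs : INR (S k) <> 0) by (apply not_0_INR; lia).
    pose proof (sin_INR_mult_2PI (S k)) as Hper.
    remember (INR (S k)) as s.
    apply is_RInt_periodic_derive with (fun t => b * sin (s * t) / s).
    + intros t. auto_derive; [easy|]. field. exact Hs.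
    + intros t. apply (ex_derive_continuous (K := R_AbsRing) (V := R_NormedModule)).
      auto_derive. easy.
    + rewrite Rmult_0_r, Hper. reflexivity.
Qed.

Lemma RtoC_neq0 (x : R) : x <> 0 -> RtoC x <> 0%C.
Proof. intros Hx E. apply Hx, RtoC_inj, E. Qed.

Lemma Cmod_between_neq0 (x r : R) (z : C) : 0 < r < x -> Cmod z = r ->
  z <> 0%C /\ (x - z)%C <> 0%C.
Proof.
  intros Hrx Hz. split.
  - apply Cmod_gt_0. lra.
  - intros E. replace z with (RtoC x) in Hz by (rewrite <- (Cplus_0_l z), <- E; ring).
    rewrite Cmod_R in Hz. pose proof (Rle_abs x). lra.
Qed.

Definition circle (r t : R) : C := (r * cos t, r * sin t).

Lemma circle_tangent (r t : R) : ((- r * sin t, r * cos t) : C) = (Ci * circle r t)%C.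
Proof. unfold circle, Ci, Cmult; cbn. f_equal; ring. Qed.

Lemma Cmod_circle (r t : R) : 0 <= r -> Cmod (circle r t) = r.
Proof.
  intros Hr. unfold Cmod, circle; cbn [fst snd].
  replace ((r * cos t) ^ 2 + (r * sin t) ^ 2) with (r ^ 2)
    by (pose proof (sin2_cos2 t) as E; unfold Rsqr in E; nra).
  apply sqrt_pow2, Hr.
Qed.

Lemma circle_pow (r t : R) (j : nat) : (circle r t ^ j)%C = circle (r ^ j) (INR j * t).
Proof.
  induction j as [|j IH].
  - unfold circle. simpl. rewrite Rmult_0_l, cos_0, sin_0. unfold RtoC. f_equal; ring.
  - rewrite Cpow_S, IH, S_INR.
    replace ((INR j + 1) * t) with (t + INR j * t) by ring.
    unfold circle, Cmult; cbn [fst snd]. rewrite cos_plus, sin_plus. f_equal; simpl; ring.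
Qed.

Lemma circle_inv (r t : R) : 0 < r -> (/ circle r t)%C = circle (/ r) (- t).
Proof.
  intros Hr. unfold circle, Cinv; cbn [fst snd]. rewrite cos_neg, sin_neg.
  replace ((r * cos t) ^ 2 + (r * sin t) ^ 2) with (r ^ 2)
    by (pose proof (sin2_cos2 t) as E; unfold Rsqr in E; nra).
  f_equal; field; lra.
Qed.

Definition is_circle_integral (f : C -> C) (r : R) (l : C) : Prop :=
  is_RInt (V := C_R_NormedModule)
    (fun t => Cmult (f (circle r t)) (- r * sin t, r * cos t)) 0 (2 * PI) l.

Lemma circle_integral_unique (f : C -> C) (r : R) (l : C) :
  is_circle_integral f r l -> circle_integral f r = l.
Proof. exact (is_RInt_unique (V := C_R_CompleteNormedModule) _ _ _ _). Qed.

Lemma is_circle_integral_param (f : C -> C) (g : R -> C) (r : R) (l : C) :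
  (forall t, (f (circle r t) * (Ci * circle r t))%C = g t) ->
  is_RInt (V := C_R_NormedModule) g 0 (2 * PI) l -> is_circle_integral f r l.
Proof.
  intros Hfg. apply is_RInt_ext. intros t _. rewrite circle_tangent. symmetry. apply Hfg.
Qed.

Lemma is_circle_integral_ext (f g : C -> C) (r : R) (l : C) : 0 <= r ->
  (forall z, Cmod z = r -> f z = g z) ->
  is_circle_integral f r l -> is_circle_integral g r l.
Proof.
  intros Hr Hfg. apply is_RInt_ext. intros t _.
  rewrite Hfg by (apply Cmod_circle; exact Hr). reflexivity.
Qed.

Lemma is_circle_integral_lincomb (a b : R) {f g h : C -> C} {r : R} {lf lg l : C} :
  is_circle_integral f r lf -> is_circle_integral g r lg -> 0 <= r ->
  (forall z, Cmod z = r -> h z = (a * f z + b * g z)%C) ->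
  l = (a * lf + b * lg)%C -> is_circle_integral h r l.
Proof.
  intros Hf Hg Hr Hh ->.
  apply is_circle_integral_ext with (fun z => (a * f z + b * g z)%C);
    [exact Hr | intros z Hz; symmetry; apply Hh, Hz |].
  replace (a * lf + b * lg)%C with (plus (scal a lf) (scal b lg))
    by (rewrite !scal_R_Cmult; reflexivity).
  refine (is_RInt_ext _ _ _ _ _ _ (is_RInt_plus _ _ _ _ _ _
    (is_RInt_scal _ _ _ a _ Hf) (is_RInt_scal _ _ _ b _ Hg))).
  intros t _.
  rewrite !scal_R_Cmult.
  (* The equation lives in the carrier of [C_R_NormedModule], out of reach of [ring]. *)
  assert (E : forall x y w : C, (a * (x * w) + b * (y * w) = (a * x + b * y) * w)%C)
    by (intros; ring).
  apply E.
Qed.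

Definition two_pi_i : C := Cmult (RtoC (2 * PI)) Ci.

Lemma two_pi_i_neq0 : two_pi_i <> 0%C.
Proof.
  apply Cmult_neq_0.
  - apply RtoC_neq0. pose proof PI_RGT_0. lra.
  - intros E. injection E. lra.
Qed.

Lemma is_circle_integral_pow (r : R) (j : nat) : is_circle_integral (fun z => z ^ j)%C r 0.
Proof.
  apply (is_circle_integral_param _
    (fun t => (- r ^ S j * sin (INR (S j) * t), r ^ S j * cos (INR (S j) * t)))).
  - intros t.
    replace (circle r t ^ j * (Ci * circle r t))%C with (Ci * circle r t ^ S j)%C
      by (rewrite Cpow_S; ring).
    rewrite circle_pow. unfold circle, Ci, Cmult; cbn [fst snd]. f_equal; ring.
  - apply (is_RInt_fct_extend_pair (U := R_NormedModule) (V := R_NormedModule));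
      [apply is_RInt_sin_mult | apply (is_RInt_cos_mult (S j))].
Qed.

Lemma is_circle_integral_inv_pow (r : R) (q : nat) : 0 < r ->
  is_circle_integral (fun z => / z ^ S q)%C r (match q with O => two_pi_i | S _ => 0 end)%C.
Proof.
  intros Hr.
  replace (match q with O => two_pi_i | S _ => 0 end)%C
    with ((0, match q with O => 2 * PI * (/ r) ^ q | S _ => 0 end) : C)
    by (destruct q; unfold two_pi_i, Ci, RtoC, Cmult; cbn; f_equal; ring).
  apply (is_circle_integral_param _
    (fun t => ((/ r) ^ q * sin (INR q * t), (/ r) ^ q * cos (INR q * t)))).
  - intros t.
    assert (Hz : circle r t <> 0%C)
      by (apply Cmod_gt_0; rewrite Cmod_circle; lra).
    replace (/ circle r t ^ S q * (Ci * circle r t))%C with (Ci * (/ circle r t) ^ q)%C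
      by (rewrite Cpow_inv, Cpow_S by exact Hz; field; split; [apply Cpow_nz|]; exact Hz).
    rewrite circle_inv, circle_pow by exact Hr.
    replace (INR q * - t) with (- (INR q * t)) by ring.
    unfold circle, Ci, Cmult; cbn [fst snd]. rewrite cos_neg, sin_neg. f_equal; ring.
  - apply (is_RInt_fct_extend_pair (U := R_NormedModule) (V := R_NormedModule));
      [apply is_RInt_sin_mult | apply is_RInt_cos_mult].
Qed.

Lemma is_circle_integral_inv_sub (x r : R) : 0 < r < x ->
  is_circle_integral (fun z => / (x - z))%C r 0.
Proof.
  intros [Hr Hrx].
  assert (Hre : forall t, 0 < x - r * cos t)
    by (intros t; pose proof (COS_bound t); nra).
  apply (is_circle_integral_param _ (fun t =>
    (- x * r * sin t / ((x - r * cos t) ^ 2 + (r * sin t) ^ 2),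
     (x * r * cos t - r ^ 2 * (cos t ^ 2 + sin t ^ 2))
       / ((x - r * cos t) ^ 2 + (r * sin t) ^ 2)))).
  { intros t. pose proof (Hre t).
    unfold circle, Ci, Cinv, Cminus, Cplus, Copp, Cmult, RtoC; cbn [fst snd].
    f_equal; field; nra. }
  (* [- log (x - z)] is a primitive along the circle, single-valued because
     [Re (x - z) > 0]; these are its real and imaginary parts. *)
  apply (is_RInt_fct_extend_pair (U := R_NormedModule) (V := R_NormedModule)); cbn [fst snd].
  - apply is_RInt_periodic_derive
      with (fun t => - / 2 * ln ((x - r * cos t) ^ 2 + (r * sin t) ^ 2)).
    + intros t. pose proof (Hre t). auto_derive; [nra|]. field. nra.
    + intros t. pose proof (Hre t).
      apply (ex_derive_continuous (K := R_AbsRing) (V := R_NormedModule)).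
      auto_derive. nra.
    + rewrite cos_2PI, sin_2PI, cos_0, sin_0. reflexivity.
  - apply is_RInt_periodic_derive with (fun t => atan (r * sin t / (x - r * cos t))).
    + intros t. pose proof (Hre t). auto_derive; [lra|].
      field. repeat split; nra.
    + intros t. pose proof (Hre t).
      apply (ex_derive_continuous (K := R_AbsRing) (V := R_NormedModule)).
      auto_derive. nra.
    + rewrite cos_2PI, sin_2PI, cos_0, sin_0. reflexivity.
Qed.

Lemma is_circle_integral_pow_div_sub (x r : R) (k : nat) : 0 < r < x ->
  is_circle_integral (fun z => z ^ k / (x - z))%C r 0.
Proof.
  intros Hrx. induction k as [|k IH].
  - apply is_circle_integral_ext with (fun z => / (x - z))%C;
      [lra | | exact (is_circle_integral_inv_sub x r Hrx)].
    intros z Hz. destruct (Cmod_between_neq0 x r z Hrx Hz) as [_ Hxz].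
    simpl. field. exact Hxz.
  - apply (is_circle_integral_lincomb x (-1) IH (is_circle_integral_pow r k));
      [lra | | ring].
    intros z Hz. destruct (Cmod_between_neq0 x r z Hrx Hz) as [_ Hxz].
    rewrite Cpow_S. field. exact Hxz.
Qed.

Lemma is_circle_integral_inv_pow_div_sub (x r : R) (m : nat) : 0 < r < x ->
  is_circle_integral (fun z => 1 / z ^ m / (x - z))%C r
    (two_pi_i * RtoC (match m with O => 0 | S _ => / x ^ m end))%C.
Proof.
  intros Hrx. assert (Hx : x <> 0) by lra.
  induction m as [|m IH].
  - change (match 0%nat with O => 0 | S _ => / x ^ 0 end) with 0.
    rewrite Cmult_0_r.
    apply is_circle_integral_ext with (fun z => z ^ 0 / (x - z))%C;
      [lra | | exact (is_circle_integral_pow_div_sub x r 0 Hrx)].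
    intros z Hz. destruct (Cmod_between_neq0 x r z Hrx Hz) as [_ Hxz].
    simpl. field. exact Hxz.
  - (* [1 / (z^(m+1) (x - z)) = (1 / (z^m (x - z)) + 1 / z^(m+1)) / x] *)
    apply (is_circle_integral_lincomb (/ x) (/ x) IH
      (is_circle_integral_inv_pow r m ltac:(lra))); [lra | |].
    + intros z Hz. destruct (Cmod_between_neq0 x r z Hrx Hz) as [Hz0 Hxz].
      rewrite Cpow_S, RtoC_inv by exact Hx.
      field. repeat split; try apply Cpow_nz; auto. apply RtoC_neq0, Hx.
    + destruct m as [|m].
      * rewrite pow_1. ring.
      * replace (/ x ^ S (S m)) with (/ x * / x ^ S m)
          by (rewrite <- Rinv_mult; f_equal; simpl; ring).
        rewrite RtoC_mult. ring.
Qed.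

Lemma is_circle_integral_cpoch_mul_pow_div_sub (x r : R) (n k : nat) : 0 < r < x ->
  is_circle_integral (fun z => cpoch z n * z ^ k / (x - z))%C r 0.
Proof.
  intros Hrx. revert k. induction n as [|n IH]; intros k.
  - apply is_circle_integral_ext with (fun z => z ^ k / (x - z))%C;
      [lra | | exact (is_circle_integral_pow_div_sub x r k Hrx)].
    intros z _. cbv beta. cbn [cpoch]. unfold Cdiv. ring.
  - apply (is_circle_integral_lincomb 1 (INR n) (IH (S k)) (IH k)); [lra | | ring].
    intros z _. cbv beta. cbn [cpoch]. rewrite Cpow_S. unfold Cdiv. ring.
Qed.

Lemma is_circle_integral_cpoch_div_pow_sub (x r : R) (n m : nat) : 0 < r < x ->
  is_circle_integral (fun z => cpoch z n / z ^ m / (x - z))%C r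
    (two_pi_i * RtoC (stirling_partial n m x / x ^ m))%C.
Proof.
  intros Hrx. assert (Hx : x <> 0) by lra.
  revert m. induction n as [|n IH]; intros m.
  - replace (stirling_partial 0 m x / x ^ m) with (match m with O => 0 | S _ => / x ^ m end)
      by (rewrite stirling_partial_0; destruct m; simpl; field; auto using pow_nonzero).
    exact (is_circle_integral_inv_pow_div_sub x r m Hrx).
  - destruct m as [|m].
    + change (stirling_partial (S n) 0 x) with 0.
      rewrite Rdiv_0_l, Cmult_0_r.
      apply is_circle_integral_ext with (fun z => cpoch z (S n) * z ^ 0 / (x - z))%C;
        [lra | | exact (is_circle_integral_cpoch_mul_pow_div_sub x r (S n) 0 Hrx)].
      intros z Hz. destruct (Cmod_between_neq0 x r z Hrx Hz) as [_ Hxz].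
      simpl. field. exact Hxz.
    + apply (is_circle_integral_lincomb 1 (INR n) (IH m) (IH (S m))); [lra | |].
      * intros z Hz. destruct (Cmod_between_neq0 x r z Hrx Hz) as [Hz0 Hxz].
        cbn [cpoch]. rewrite Cpow_S. field. auto using Cpow_nz.
      * rewrite stirling_partial_S.
        replace ((x * stirling_partial n m x + INR n * stirling_partial n (S m) x) / x ^ S m)
          with (stirling_partial n m x / x ^ m + INR n * (stirling_partial n (S m) x / x ^ S m))
          by (simpl; field; auto using pow_nonzero).
        rewrite RtoC_plus, RtoC_mult. ring.
Qed.

Lemma circle_integral_cpoch_shift_div_pow_sub (x r : R) (n m : nat) : 0 < r < x ->
  circle_integral (fun z => cpoch (z + 1) n / z ^ m / (x - z))%C r
  = (two_pi_i * RtoC (stirling_partial (S n) (S m) x / x ^ S m))%C.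
Proof.
  intros Hrx. apply circle_integral_unique.
  apply is_circle_integral_ext with (fun z => cpoch z (S n) / z ^ S m / (x - z))%C;
    [lra | | exact (is_circle_integral_cpoch_div_pow_sub x r (S n) (S m) Hrx)].
  intros z Hz. destruct (Cmod_between_neq0 x r z Hrx Hz) as [Hz0 Hxz].
  rewrite cpoch_S_shift, Cpow_S. field. auto using Cpow_nz.
Qed.

Theorem corollary1 (n m : nat) (theta r : R) :
  (1 <= n)%nat -> (m <= n)%nat -> 0 < theta -> 0 < r -> r < theta ->
  RtoC (Tprime (S n) (S m) theta) =
  Cmult (RtoC (theta ^ m / poch (theta + 1) n))
    (Cmult (Cinv (Cmult (RtoC (2 * PI)) Ci))
       (circle_integral
          (fun z => Cdiv (Cdiv (cpoch (Cplus z (RtoC 1)) n) (Cpow z m))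
                         (Cminus (RtoC theta) z))
          r)).
Proof.
  intros _ _ Htheta Hr Hrtheta.
  rewrite circle_integral_cpoch_shift_div_pow_sub by lra.
  fold two_pi_i.
  rewrite (Cmult_assoc (/ two_pi_i)), Cinv_l, Cmult_1_l, <- RtoC_mult by exact two_pi_i_neq0.
  f_equal.
  rewrite Tprime_stirling_partial, poch_S_shift.
  pose proof (poch_pos (theta + 1) n ltac:(lra)).
  simpl. field. repeat split; try apply pow_nonzero; lra.
Qed.
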